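(* Let $X$ be a compact metric space with metric $d$, let $0<L<1$, and let $f\colon X\to X$ be a continuous map with the $L$-Lipschitz shadowing property. Then the set $\mathcal{C}(f)$ of chain components of $f$ is finite, and for every $C\in\mathcal{C}(f)$, the restriction $f|_C\colon C\to C$ (with the restricted metric) has the $L$-Lipschitz shadowing property.
   Context: For a continuous map $g\colon Y\to Y$ on a metric space $(Y,d)$ and $\delta>0$, a sequence $(x_i)_{i\ge0}$ in $Y$ is a $\delta$-pseudo orbit of $g$ if $d(g(x_i),x_{i+1})\le\delta$ for all $i\ge0$; it is $\epsilon$-shadowed by $y$ if $d(g^i(y),x_i)\le\epsilon$ for all $i\ge0$. $g$ has the $L$-Lipschitz shadowing property if there is $\delta_0>0$ such that for every $0<\delta\le\delta_0$, every $\delta$-pseudo orbit of $g$ is $L\delta$-shadowed by some point of $Y$. A $\delta$-chain of $f$ is a finite sequence $(x_i)_{i=0}^k$, $k\ge1$, with $d(f(x_i),x_{i+1})\le\delta$ for $0\le i\le k-1$. Write $x\to y$ if for every $\delta>0$ there is a $\delta$-chain from $x$ to $y$ (i.e. $x_0=x$, $x_k=y$). $CR(f)=\{x\in X: x\to x\}$. On $CR(f)$ define $x\leftrightarrow y$ iff $x\to y$ and $y\to x$; this is an equivalence relation, and its equivalence classes are the chain components of $f$; $\mathcal{C}(f)$ denotes the set of chain components. Each chain component is a closed $f$-invariant subset. *)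

From HB Require Import structures.
From mathcomp Require Import all_boot all_order all_algebra.
From mathcomp Require Import all_classical all_reals all_analysis.
Set Implicit Arguments. Unset Strict Implicit. Unset Printing Implicit Defensive.
Import Order.TTheory GRing.Theory Num.Theory.
Local Open Scope classical_set_scope.
Local Open Scope ring_scope.

Section Defs.
Context {R : realType} {X : metricType R}.
Local Notation d := (@mdist R X).

Definition pseudo_orbit (f : X -> X) (delta : R) (x : nat -> X) : Prop :=
  forall i, d (f (x i)) (x i.+1) <= delta.

Definition shadowed_by (f : X -> X) (eps : R) (x : nat -> X) (y : X) : Prop :=
  forall i, d (iter i f y) (x i) <= eps.

(* L-Lipschitz shadowing property of the restriction of f to A (A f-invariant),
   with the restricted metric: pseudo orbits and shadowing points lie in A. *)
Definition lip_shadowing_on (A : set X) (f : X -> X) (L : R) : Prop :=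
  exists2 delta0 : R, 0 < delta0 &
    forall delta : R, 0 < delta -> delta <= delta0 ->
    forall x : nat -> X, (forall i, A (x i)) -> pseudo_orbit f delta x ->
    exists2 y : X, A y & shadowed_by f (L * delta) x y.

Definition lip_shadowing (f : X -> X) (L : R) : Prop :=
  lip_shadowing_on setT f L.

Definition delta_chain (f : X -> X) (delta : R) (a b : X) : Prop :=
  exists (k : nat) (x : nat -> X), [/\ (1 <= k)%N, x 0%N = a, x k = b &
    forall i, (i < k)%N -> d (f (x i)) (x i.+1) <= delta].

Definition chain_rel (f : X -> X) (a b : X) : Prop :=
  forall delta : R, 0 < delta -> delta_chain f delta a b.

Definition chain_recurrent (f : X -> X) : set X := [set x | chain_rel f x x].

Definition chain_equiv (f : X -> X) (a b : X) : Prop :=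
  chain_recurrent f a /\ chain_recurrent f b /\ chain_rel f a b /\ chain_rel f b a.

Definition chain_components (f : X -> X) : set (set X) :=
  [set C | exists2 x, chain_recurrent f x & C = [set y | chain_equiv f x y]].

End Defs.

From HB Require Import structures.
From mathcomp Require Import all_boot all_order all_algebra.
From mathcomp Require Import all_classical all_reals all_analysis.
From mathcomp Require Import ring lra finmap.
Set Implicit Arguments. Unset Strict Implicit. Unset Printing Implicit Defensive.
Import Order.TTheory GRing.Theory Num.Theory.
Local Open Scope classical_set_scope.
Local Open Scope ring_scope.

(* Lipschitz shadowing with L < 1 makes chains self-improving: a delta-chain
   from a chain recurrent point a to b, continued by the forward orbit of b,
   is a pseudo orbit, and its L delta-shadowing point w gives an
   (L delta + eps)-chain a ~> w ~> b.  Iterating, a -> b as soon as a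
   delta0-chain from a to b exists, in particular when d(a, b) <= delta0 / 2.
   So chain recurrent points closer than a fixed radius r are chain
   equivalent, and by compactness there are finitely many chain components.
   If a pseudo orbit (x_i) inside a component C is shadowed by y, then x_0 -> y
   since y is close to x_0, and y -> q -> x_n -> x_0 for an omega-limit point q
   of y close to some iterate f^n y, hence close to x_n; so y lies in C. *)

Section DeltaChains.
Context {R : realType} {X : metricType R} (f : X -> X).
Local Notation d := (@mdist R X).

Lemma delta_chain_trans (e : R) a b c :
  delta_chain f e a b -> delta_chain f e b c -> delta_chain f e a c.
Proof.
move=> [k [x [k_gt0 x0 xk x_step]]] [m [y [m_gt0 y0 ym y_step]]].
exists (k + m)%N, (fun i => if (i < k)%N then x i else y (i - k)%N); split.
- by rewrite (leq_trans k_gt0) // leq_addr.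
- by rewrite k_gt0.
- by rewrite ltnNge leq_addr /= addKn.
move=> i i_lt; case: (ltnP i k) => ik.
  case: (ltnP i.+1 k) => ik1; first exact: x_step.
  have Sik : i.+1 = k by apply/eqP; rewrite eqn_leq ik ik1.
  by rewrite -Sik subnn y0 -xk -Sik; apply: x_step.
rewrite ltnNge (leq_trans ik) //= subSn //; apply: y_step.
by rewrite ltn_subLR.
Qed.

Lemma delta_chain_le (e e' : R) a b :
  e <= e' -> delta_chain f e a b -> delta_chain f e' a b.
Proof.
move=> ee' [k [x [k_gt0 x0 xk x_step]]]; exists k, x; split => // i ik.
exact: le_trans (x_step i ik) ee'.
Qed.

Lemma delta_chain_jump (e eta : R) a b c :
  delta_chain f e a b -> d b c <= eta -> delta_chain f (e + eta) a c.
Proof.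
move=> [k [x [k_gt0 x0 xk x_step]]] bc.
have eta_ge0 : 0 <= eta by apply: le_trans bc; apply: mdist_ge0.
exists k, (fun i => if i == k then c else x i); split => //.
- by rewrite (ltn_eqF k_gt0).
- by rewrite eqxx.
move=> i ik; rewrite (ltn_eqF ik); case: eqP => [Sik|_].
  apply: le_trans (metric_triangle _ b _) _; apply: lerD => //.
  by rewrite -xk -Sik; apply: x_step.
by rewrite -[X in X <= _]addr0; apply: lerD => //; apply: x_step.
Qed.

Lemma delta_chain_iter (e : R) a b n :
  (0 < n)%N -> d (iter n f a) b <= e -> delta_chain f e a b.
Proof.
move=> n_gt0 nb; rewrite -[e]add0r; apply: delta_chain_jump nb.
by exists n, (fun i => iter i f a); split => // i _; rewrite mdistxx.
Qed.

Lemma chain_rel_trans a b c :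
  chain_rel f a b -> chain_rel f b c -> chain_rel f a c.
Proof.
by move=> ab bc e e_gt0; apply: delta_chain_trans (ab e e_gt0) (bc e e_gt0).
Qed.

Lemma chain_class_eq a b : chain_rel f a b -> chain_rel f b a ->
  [set y | chain_equiv f a y] = [set y | chain_equiv f b y].
Proof.
move=> ab ba; apply/seteqP; split => y /= [_ [y_rec [ay ya]]].
  by do !split => //; [exact: chain_rel_trans ba ab|
    exact: chain_rel_trans ba ay|exact: chain_rel_trans ya ab].
by do !split => //; [exact: chain_rel_trans ab ba|
  exact: chain_rel_trans ab ay|exact: chain_rel_trans ya ba].
Qed.

End DeltaChains.

Lemma exists_expr_lt (R : realType) (q eta : R) :
  0 <= q -> q < 1 -> 0 < eta -> exists n, q ^+ n < eta.
Proof.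
move=> q_ge0 q_lt1 eta_gt0.
have := @cvg_expr R q; rewrite ger0_norm // => /(_ q_lt1).
move=> /cvgr0_norm_lt /(_ _ eta_gt0) [N _ qN].
by exists N; have := qN N (leqnn N); rewrite /= ger0_norm // exprn_ge0.
Qed.

Section ShrinkingChains.
Context {R : realType} {X : metricType R} (f : X -> X).
Local Notation d := (@mdist R X).
Variables (L e0 : R).
Hypotheses (L_ge0 : 0 <= L) (L_lt1 : L < 1) (e0_gt0 : 0 < e0).
Hypothesis shadow : forall e, 0 < e -> e <= e0 -> forall x : nat -> X,
  pseudo_orbit f e x -> exists y, shadowed_by f (L * e) x y.

Lemma delta_chain_shrink a b (e eps : R) :
  chain_recurrent f a -> 0 < e -> e <= e0 -> 0 < eps ->
  delta_chain f e a b -> delta_chain f (L * e + eps) a b.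
Proof.
move=> a_rec e_gt0 e_le eps_gt0 [k [x [k_gt0 x0 xk x_step]]].
pose p i := if (i <= k)%N then x i else iter (i - k) f b.
have pE i : (k <= i)%N -> p i = iter (i - k) f b.
  move=> ki; rewrite /p; case: leqP => // ik.
  have -> : i = k by apply/eqP; rewrite eqn_leq ik ki.
  by rewrite subnn /= xk.
have p_po : pseudo_orbit f e p.
  move=> i; case: (ltnP i k) => ik.
    by rewrite /p (ltnW ik) ik; apply: x_step.
  by rewrite !pE ?subSn //= ?mdistxx ?ltW // leqW.
have [w w_sh] := shadow e_gt0 e_le p_po.
have aw : d a w <= L * e.
  by rewrite metric_sym; have := w_sh 0%N; rewrite /p leq0n x0.
have wb : d (iter k f w) b <= L * e by have := w_sh k; rewrite /p leqnn xk.
apply: (delta_chain_trans (b := w)).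
  by rewrite addrC; apply: delta_chain_jump aw; apply: a_rec.
by apply: delta_chain_iter k_gt0 (le_trans wb _); rewrite lerDl ltW.
Qed.

Lemma chain_rel_of_delta_chain a b (e : R) :
  chain_recurrent f a -> 0 < e -> e <= e0 -> delta_chain f e a b ->
  chain_rel f a b.
Proof.
move=> a_rec e_gt0 e_le ab eta eta_gt0.
pose q := (1 + L) / 2.
have q_gt0 : 0 < q by move: L_ge0; rewrite /q; lra.
have q_lt1 : q < 1 by move: L_lt1; rewrite /q; lra.
(* shrinking with eps := (1 - L) e' / 2 turns an e'-chain into a (q e')-chain *)
have ab_q n : delta_chain f (e * q ^+ n) a b.
  elim: n => [|n IH]; first by rewrite expr0 mulr1.
  have eqn_gt0 : 0 < e * q ^+ n by rewrite mulr_gt0 // exprn_gt0.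
  have eqn_le : e * q ^+ n <= e0.
    apply: le_trans e_le; rewrite ler_piMr ?(ltW e_gt0) //.
    by rewrite exprn_ile1 ?ltW.
  have eps_gt0 : 0 < e * q ^+ n * ((1 - L) / 2).
    by rewrite mulr_gt0 // divr_gt0 // subr_gt0.
  have := delta_chain_shrink a_rec eqn_gt0 eqn_le eps_gt0 IH.
  suff -> : L * (e * q ^+ n) + e * q ^+ n * ((1 - L) / 2) = e * q ^+ n.+1 by [].
  by rewrite exprS /q; field.
have [n qn] : exists n, q ^+ n < eta / e.
  by apply: exists_expr_lt; rewrite ?divr_gt0 ?ltW.
by apply: delta_chain_le (ab_q n); rewrite mulrC -ler_pdivlMr // ltW.
Qed.

Lemma chain_rel_near a b :
  chain_recurrent f a -> d a b <= e0 / 2 -> chain_rel f a b.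
Proof.
move=> a_rec ab.
have ab_chain : delta_chain f (e0 / 2 + e0 / 2) a b.
  by apply: delta_chain_jump ab; apply: a_rec; rewrite divr_gt0.
by rewrite -splitr in ab_chain; apply: chain_rel_of_delta_chain ab_chain.
Qed.

End ShrinkingChains.

Lemma lip_shadowing_chain_rel_near (R : realType) (X : metricType R)
    (f : X -> X) (L : R) :
  0 <= L -> L < 1 -> lip_shadowing f L ->
  exists2 r : R, 0 < r &
    forall a b, chain_recurrent f a -> mdist a b <= r -> chain_rel f a b.
Proof.
move=> L_ge0 L_lt1 [e0 e0_gt0 shadow]; exists (e0 / 2); first by rewrite divr_gt0.
move=> a b; apply: (chain_rel_near L_ge0 L_lt1 e0_gt0) => e e_gt0 e_le x x_po.
by have [y _ y_sh] := shadow e e_gt0 e_le x (fun=> I) x_po; exists y.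
Qed.

Section OmegaLimit.
Context {R : realType} {X : metricType R} (f : X -> X).
Local Notation d := (@mdist R X).

Definition omega_limit (y q : X) : Prop :=
  forall eps, 0 < eps -> forall N, exists2 n, (N <= n)%N & d q (iter n f y) < eps.

Lemma omega_limit_exists (y : X) : compact [set: X] -> exists q, omega_limit y q.
Proof.
move=> cpt; have [q [_ q_cl]] := cpt ((fun n => iter n f y) @ \oo) _ filterT.
exists q => eps eps_gt0 N.
have tail_N :
    ((fun n => iter n f y) @ \oo) [set iter n f y | n in [set n | (N <= n)%N]].
  by exists N => // n /= Nn; exists n.
have [_ [[n Nn <-] qn]] := q_cl _ (ball q eps) tail_N (nbhsx_ballx q eps eps_gt0).
by exists n => //; move: qn; rewrite ballEmdist.
Qed.

Lemma chain_rel_omega_limit (y q : X) : omega_limit y q -> chain_rel f y q.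
Proof.
move=> yq eta eta_gt0; have [n n_gt0 qn] := yq eta eta_gt0 1%N.
by apply: delta_chain_iter n_gt0 _; rewrite metric_sym ltW.
Qed.

Lemma omega_limit_chain_recurrent (y q : X) :
  continuous f -> omega_limit y q -> chain_recurrent f q.
Proof.
move=> f_cont yq eta eta_gt0.
have f_near_q := @metricType_numDomainType.cvgr_dist_lt _ _ _ _
  (nbhs_filter q) f (f q) (f_cont q) _ eta_gt0.
have [rho rho_gt0 f_near] :=
  iffLR (metricType_numDomainType.nbhs_mdistP _ _) f_near_q.
have [n _ qn] := yq rho rho_gt0 0%N.
have [m nm qm] := yq eta eta_gt0 n.+2.
apply: (delta_chain_trans (b := iter n.+1 f y)).
  by apply: (delta_chain_iter (n := 1%N)) => //; exact/ltW/f_near.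
apply: (delta_chain_iter (n := (m - n.+1)%N)); first by rewrite subn_gt0.
by rewrite -iterD subnK 1?metric_sym ?ltW // ltnW.
Qed.

End OmegaLimit.

(* [compact_cover] needs a pointed space; [pointed_at T t] is T pointed at t. *)
Definition pointed_at (T : Type) (t : T) : Type := T.
HB.instance Definition _ (T : topologicalType) (t : T) :=
  Topological.copy (@pointed_at T t) T.
HB.instance Definition _ (T : topologicalType) (t : T) :=
  isPointed.Build (@pointed_at T t) t.

Lemma compact_ball_cover {R : realType} {X : metricType R} (r : R) :
  compact [set: X] -> 0 < r ->
  exists D : {fset X}, forall x, exists2 c, c \in D & mdist c x < r.
Proof.
move=> cpt r_gt0; have [[x0 _]|noX] := pselect (exists x : X, True); last first.
  by exists fset0 => x; exfalso; apply: noX; exists x.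
have cover_cpt : cover_compact [set: @pointed_at X x0].
  by rewrite -compact_cover; exact: cpt.
have balls_cover : [set: X] `<=` \bigcup_(c in [set: X]) (ball c r)°.
  by move=> x _; exists x => //; exact: (open_nbhs_ball x (PosNum r_gt0)).2.
have [D _ D_cover] := cover_cpt X setT (fun c => (ball c r)°)
  (fun c _ => @open_interior _ _) balls_cover.
exists D => x; have [c Dc /interior_subset] := D_cover x I.
by rewrite ballEmdist; exists c.
Qed.

Section ChainComponents.
Context {R : realType} {X : metricType R} (f : X -> X).
Local Notation d := (@mdist R X).
Variable r : R.
Hypothesis r_gt0 : 0 < r.
Hypothesis chain_rel_nearby :
  forall a b, chain_recurrent f a -> d a b <= r -> chain_rel f a b.

Lemma chain_components_finite :
  compact [set: X] -> finite_set (chain_components f).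
Proof.
move=> cpt; have r2_gt0 : 0 < r / 2 by rewrite divr_gt0.
have [D D_cover] := compact_ball_cover cpt r2_gt0.
pose class_near c := [set y | exists2 x, chain_recurrent f x /\ d c x < r / 2 &
  chain_equiv f x y].
apply: (@sub_finite_set _ _ (class_near @` [set` D])); last first.
  by apply: finite_image; exact: finite_fset.
move=> _ [x x_rec ->]; have [c Dc cx] := D_cover x.
exists c => //; apply/seteqP; split => [y [x' [x'_rec cx'] x'y]|y xy]; last first.
  by exists x.
have xx' : d x x' <= r.
  apply: le_trans (metric_triangle x c x') _.
  by rewrite [r]splitr metric_sym lerD // ltW.
have x'x : d x' x <= r by rewrite metric_sym.
by rewrite (chain_class_eq (chain_rel_nearby x_rec xx')
  (chain_rel_nearby x'_rec x'x)).
Qed.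

Lemma chain_component_lip_shadowing (L : R) (C : set X) :
  compact [set: X] -> continuous f -> 0 <= L -> L <= 1 -> lip_shadowing f L ->
  chain_components f C -> lip_shadowing_on C f L.
Proof.
move=> cpt f_cont L_ge0 L_le1 [e0 e0_gt0 shadow] [p p_rec ->].
have r2_gt0 : 0 < r / 2 by rewrite divr_gt0.
exists (Num.min e0 (r / 2)); first by rewrite lt_min e0_gt0 r2_gt0.
move=> e e_gt0; rewrite le_min => /andP[e_le_e0 e_le_r2] x xC x_po.
have [y _ y_sh] := shadow e e_gt0 e_le_e0 x (fun=> I) x_po.
have Le_le : L * e <= r / 2 by apply: le_trans e_le_r2; rewrite ler_piMl // ltW.
exists y => //.
have [_ [x0_rec [p_x0 _]]] := xC 0%N.
have x0_y : chain_rel f (x 0%N) y.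
  apply: chain_rel_nearby => //; rewrite metric_sym.
  by apply: le_trans (y_sh 0%N) (le_trans Le_le _); move: r_gt0; lra.
have [q yq] := omega_limit_exists f y cpt.
have [n _ qn] := yq _ r2_gt0 0%N.
have [_ [_ [_ xn_p]]] := xC n.
have q_xn : chain_rel f q (x n).
  apply: chain_rel_nearby; first exact: omega_limit_chain_recurrent yq.
  apply: le_trans (metric_triangle q (iter n f y) (x n)) _.
  by rewrite [r]splitr lerD //; [exact: ltW | exact: le_trans (y_sh n) Le_le].
have y_p : chain_rel f y p.
  exact: chain_rel_trans (chain_rel_omega_limit yq) (chain_rel_trans q_xn xn_p).
have p_y : chain_rel f p y by exact: chain_rel_trans p_x0 x0_y.
by do !split => //; exact: chain_rel_trans y_p p_y.
Qed.

End ChainComponents.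

Unset Implicit Arguments.

Theorem theorem1p8 (R : realType) (X : metricType R) (f : X -> X) (L : R) :
  compact [set: X] -> continuous f -> 0 < L -> L < 1 ->
  lip_shadowing f L ->
  finite_set (chain_components f) /\
  (forall C, chain_components f C -> lip_shadowing_on C f L).
Proof.
move=> cpt f_cont L_gt0 L_lt1 shadow.
have L_ge0 := ltW L_gt0.
have [r r_gt0 near] := lip_shadowing_chain_rel_near L_ge0 L_lt1 shadow.
split; first exact: chain_components_finite r_gt0 near cpt.
move=> C; apply: (chain_component_lip_shadowing r_gt0 near cpt f_cont) => //.
exact: ltW.
Qed.
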